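(* Let $b\in\mathbb{N}$ and $0\le a\le b-1$ be integers, and let $m,n\ge 2$ be the minimal integers with $ma\equiv a \pmod b$ and $a^{n}\equiv a\pmod b$ (assumed to exist). Consider the polyadic ring $\mathbb{Z}^{[a,b]}_{(m,n)}$. If $\mathbb{Z}^{[a,b]}_{(m,n)}$ contains a polyadic prime number, then either $a=1$ and $(m,n)=(b+1,2)$, i.e. the ring is $\mathbb{Z}^{[1,b]}_{(b+1,2)}$, or $a=b-1$ and $(m,n)=(b+1,3)$, i.e. the ring is $\mathbb{Z}^{[b-1,b]}_{(b+1,3)}$.
   Context: The ring of polyadic integer numbers $\mathbb{Z}^{[a,b]}_{(m,n)}$ is the congruence class $[[a]]_b=\{a+bk : k\in\mathbb{Z}\}$ equipped with the $m$-ary addition $\nu_m[x_1,\dots,x_m]=x_1+\dots+x_m$ and the $n$-ary multiplication $\mu_n[x_1,\dots,x_n]=x_1x_2\cdots x_n$ (ordinary integer sum and product); the choice of $m,n$ guarantees these operations are closed in $[[a]]_b$. For $\ell\in\mathbb{N}$, $\mu_n^{(\ell)}$ denotes the $\ell$-fold iterated composition of $\mu_n$, which takes $\ell(n-1)+1$ arguments. A unit of the ring is an element $e$ with $\mu_n[e,\dots,e,x]=x$ ($n-1$ copies of $e$) for all $x$ in the ring. A polyadic prime number is an element $x$ of the ring such that the ring has a unit $e$ and the only expansion of $x$ as a polyadic product $x=\mu_n^{(\ell)}[x_{1},\dots,x_{\ell(n-1)+1}]$ of elements of the ring is the trivial one $x=\mu_n^{(\ell)}[x,e,\dots,e]$ (with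 $\ell(n-1)$ copies of $e$). *)

From mathcomp Require Import all_boot all_order all_algebra.
Set Implicit Arguments. Unset Strict Implicit. Unset Printing Implicit Defensive.
Import Order.TTheory GRing.Theory Num.Theory.
Local Open Scope ring_scope.

Definition in_class (a b : nat) (x : int) : Prop := (x = a%:Z %[mod b%:Z])%Z.

(* Unit of the polyadic ring Z^{[a,b]}_{(m,n)}: mu_n[e,...,e,x] = x
   (n-1 copies of e) for all x in the ring. *)
Definition polyadic_unit (a b n : nat) (e : int) : Prop :=
  in_class a b e /\ forall x : int, in_class a b x -> e ^+ (n.-1) * x = x.

(* Polyadic prime: x is in the ring, the ring has a unit e, and every
   expansion x = mu_n^(l)[x_1, ..., x_{l(n-1)+1}] with all x_i in the ring
   is the trivial one [x, e, ..., e] (up to the order of the arguments,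
   the multiplication being commutative). *)
Definition polyadic_prime (a b n : nat) (x : int) : Prop :=
  in_class a b x /\
  exists e : int, polyadic_unit a b n e /\
    forall (l : nat) (s : seq int),
      size s = (l * n.-1).+1 ->
      (forall y, y \in s -> in_class a b y) ->
      \prod_(y <- s) y = x ->
      perm_eq s (x :: nseq (l * n.-1) e).

(** A polyadic prime needs a unit e, and the relation e^(n-1) x = x for the
    nonzero element x = a + b forces e^(n-1) = 1, hence e = 1 or e = -1, so
    a = 1 or a = b - 1 modulo b. Both residues are coprime to b, which pins m
    to b + 1, and a^n = a (mod b) holds already for n = 2 resp. n = 3. When
    -1 lies in the ring, the expansion x = x (-1) ... (-1) of a prime x with
    2(n-1) factors -1 is trivial only if e = -1; this rules out the ring
    Z^{[0,1]} = Z with unit 1 and makes n - 1 even when e = -1. *)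

From mathcomp Require Import all_boot all_order all_algebra.
From mathcomp Require Import zify.
Import Order.TTheory GRing.Theory Num.Theory.

Set Implicit Arguments.
Unset Strict Implicit.
Unset Printing Implicit Defensive.

Lemma least_ge2_le (P : nat -> Prop) (n k : nat) :
  (forall j : nat, (2 <= j)%N -> (j < n)%N -> ~ P j) ->
  (2 <= k)%N -> P k -> (n <= k)%N.
Proof. by move=> minn k2 Pk; rewrite leqNgt; apply/negP => /(minn k k2). Qed.

Lemma least_mul_fixpoint_coprime (a b m : nat) :
  (0 < b)%N -> coprime a b ->
  (2 <= m)%N -> (m * a = a %[mod b])%N ->
  (forall k : nat, (2 <= k)%N -> (k < m)%N -> (k * a <> a %[mod b])%N) ->
  m = b.+1.
Proof.
move=> b_gt0 coab m2 fixm minm; apply/eqP; rewrite eqn_leq.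
have -> : (m <= b.+1)%N.
  apply: (least_ge2_le (P := fun k => (k * a = a %[mod b])%N) minm) => //.
  by rewrite mulSn addnC mulnC modnMDl.
have b_dvd : (b %| m.-1)%N.
  have coba : coprime b a by rewrite coprime_sym.
  rewrite -(Gauss_dvdl m.-1 coba).
  have -> : (m.-1 * a = m * a - a)%N by rewrite -subn1 mulnBl mul1n.
  by rewrite -eqn_mod_dvd ?fixm // leq_pmull //; lia.
by have := dvdn_leq (_ : 0 < m.-1)%N b_dvd; lia.
Qed.

Local Open Scope ring_scope.

Lemma expr_eq1_sign (R : realDomainType) (x : R) (k : nat) :
  (0 < k)%N -> x ^+ k = 1 -> x = 1 \/ x = -1.
Proof.
move=> k_gt0 xk1.
have normx1 : `|x| = 1.
  by apply/eqP; rewrite -(pexpr_eq1 k_gt0) // -normrX xk1 normr1.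
have : x ^+ 2 == 1 by rewrite sqr_norm_eq1 normx1.
by rewrite sqrf_eq1 => /orP[] /eqP; [left | right].
Qed.

Section PolyadicClass.

Variables a b : nat.

Lemma in_class_nat (k : nat) : in_class a b k <-> (k = a %[mod b])%N.
Proof. by rewrite /in_class !modz_nat; split=> [[]|->]. Qed.

Lemma in_class_mod1 (x : int) : b = 1%N -> in_class a b x.
Proof. by move=> ->; rewrite /in_class !modz1. Qed.

Lemma in_class1 : (1 < b)%N -> (a < b)%N -> in_class a b 1 -> a = 1%N.
Proof. by move=> b_gt1 ltab /(in_class_nat 1%N); rewrite !modn_small. Qed.

Lemma in_classN1 : (a < b)%N -> in_class a b (-1) -> a = b.-1.
Proof.
move=> ltab /eqP; rewrite eqz_mod_dvd dvdzE.
have -> : `|(-1 - a%:Z)%R|%N = a.+1 by lia.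
by move/(dvdn_leq (ltn0Sn a)); lia.
Qed.

Lemma expn_mod_class (e : int) (k : nat) :
  in_class a b e -> e ^+ k = e -> (a ^ k = a %[mod b])%N.
Proof.
move=> ea ekE; apply/in_class_nat; rewrite /in_class -ea -{1}ekE.
by rewrite -modzXm ea modzXm -!natz natrX.
Qed.

Lemma polyadic_unit_expr_eq1 (n : nat) (e : int) :
  (0 < b)%N -> polyadic_unit a b n e -> e ^+ n.-1 = 1.
Proof.
move=> b_gt0 [_ unit_e].
have ab_in : in_class a b (a + b)%N by rewrite /in_class PoszD modzDr.
have ab_neq0 : (a + b)%N%:Z != 0 by rewrite eqz_nat; lia.
by apply: (mulIf ab_neq0); rewrite mul1r unit_e.
Qed.

Lemma polyadic_prime_unit (n : nat) (x : int) :
  (0 < b)%N -> (1 < n)%N -> polyadic_prime a b n x ->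
  exists2 e : int, in_class a b e & (e = 1 /\ ~ in_class a b (-1)) \/ (e = -1 /\ odd n).
Proof.
move=> b_gt0 n_gt1 [x_in [e [[e_in unit_e] trivial_exp]]].
have en1 := polyadic_unit_expr_eq1 b_gt0 (conj e_in unit_e).
have n1_gt0 : (0 < n.-1)%N by lia.
exists e => //.
have [e1|eN1] := expr_eq1_sign n1_gt0 en1; [left|right]; split=> //.
- move=> N1_in.
  pose s := x :: nseq (2 * n.-1) (-1).
  have s_in y : y \in s -> in_class a b y.
    by rewrite in_cons mem_nseq => /predU1P[->|/andP[_ /eqP->]].
  have prod_s : \prod_(y <- s) y = x.
    by rewrite big_cons big_nseq iter_mulr_1 mulnC exprM sqrr_sign mulr1.
  have size_s : size s = (2 * n.-1).+1 by rewrite /= size_nseq.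
  have := trivial_exp 2%N s size_s s_in prod_s.
  rewrite perm_cons e1 => /perm_mem/(_ (-1)).
  by rewrite !mem_nseq muln_gt0 n1_gt0 eqxx.
- move: en1; rewrite eN1 -signr_odd -[n]prednK ?(ltnW n_gt1) //=.
  by case: odd.
Qed.

End PolyadicClass.

Theorem mainTheorem1 (a b m n : nat) :
  (a < b)%N ->
  (* m = minimal integer >= 2 with m a = a (mod b) *)
  (2 <= m)%N -> (m * a = a %[mod b])%N ->
  (forall k : nat, (2 <= k)%N -> (k < m)%N -> (k * a <> a %[mod b])%N) ->
  (* n = minimal integer >= 2 with a^n = a (mod b) *)
  (2 <= n)%N -> (a ^ n = a %[mod b])%N ->
  (forall k : nat, (2 <= k)%N -> (k < n)%N -> (a ^ k <> a %[mod b])%N) ->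
  (exists x : int, polyadic_prime a b n x) ->
  (a = 1%N /\ m = b.+1 /\ n = 2%N) \/ (a = b.-1 /\ m = b.+1 /\ n = 3%N).
Proof.
move=> ltab m2 fixm minm n2 _ minn [x x_prime].
have b_gt0 : (0 < b)%N by lia.
have [e e_in [[e1 N1_out] | [eN1 odd_n]]] := polyadic_prime_unit b_gt0 n2 x_prime;
  subst e.
- have b_neq1 : b <> 1%N by move/in_class_mod1/N1_out.
  have b_gt1 : (1 < b)%N by lia.
  have n_le2 := least_ge2_le minn (leqnn 2) (expn_mod_class e_in (expr1n _ 2)).
  have a1 := in_class1 b_gt1 ltab e_in; subst a.
  left; split; [done | split; last by lia].
  exact: least_mul_fixpoint_coprime b_gt0 (coprime1n b) m2 fixm minm.
- have n_le3 := least_ge2_le minn (isT : 2 <= 3)%N (expn_mod_class (k := 3) e_in erefl).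
  have n3 : n = 3%N.
    by have [n_eq2|] := eqVneq n 2%N; [rewrite n_eq2 in odd_n | lia].
  have ab1 := in_classN1 ltab e_in; subst a.
  right; split; [done | split; last by []].
  exact: least_mul_fixpoint_coprime b_gt0 (coprimePn b_gt0) m2 fixm minm.
Qed.
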